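(* Let $r\in\mathbb C$ be transcendental over $\mathbb Q$. Let $\Psi_r:\mathsf{PGL}_2(\mathbb Z)\to\mathsf{PGL}_2(\mathbb C)$ (resp. $\Psi^\pm_r$) be the homomorphism obtained from $\Psi$ (resp. $\Psi^\pm$) by substituting $q=r$ in the matrices (after clearing denominators, so that entries are polynomials in $q$ with coefficients in $\mathbb Z[\omega]$). Then $\Psi_r$ and $\Psi^\pm_r$ are injective; i.e. the specialization maps $\Psi(\mathsf{PGL}_2(\mathbb Z))\to\Psi_r(\mathsf{PGL}_2(\mathbb Z))$ and $\Psi^\pm(\mathsf{PGL}_2(\mathbb Z))\to\Psi^\pm_r(\mathsf{PGL}_2(\mathbb Z))$ are isomorphisms.
   Context: $\omega=e^{2\pi i/6}$. An invertible matrix $\begin{bmatrix}a&b\\c&d\end{bmatrix}$ denotes the Möbius map $x\mapsto(ax+b)/(cx+d)$. $\Psi,\Psi^\pm:\mathsf{PGL}_2(\mathbb Z)\to\mathsf{PGL}_2(\mathbb C(q))$ are the homomorphisms defined on the generators $T(x)=1+x$, $S(x)=-1/x$, $V(x)=-x$ by $\Psi(T)=\Psi^\pm(T)=\begin{bmatrix}q&1\\0&1\end{bmatrix}$, $\Psi(S)=\begin{bmatrix}0&-1\\ q&0\end{bmatrix}$, $\Psi(V)=\begin{bmatrix}q&1-q\\ q-q^2&-q\end{bmatrix}$, $\Psi^{\pm}(S)=\begin{bmatrix}1&q^{-1}\\ -q+\omega^{\pm1}&-1\end{bmatrix}$, $\Psi^{\pm}(V)=\begin{bmatrix}1&\frac{1+q^{-1}}{q-\omega^{\pm1}}\\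 1-q&-1\end{bmatrix}$. *)

From HB Require Import structures.
From mathcomp Require Import all_boot all_order all_algebra.
From mathcomp Require Import complex.
From mathcomp Require Import reals.
Set Implicit Arguments. Unset Strict Implicit. Unset Printing Implicit Defensive.
Import Order.TTheory GRing.Theory Num.Theory.
Local Open Scope ring_scope.

Definition mx2 (K : Type) (a b c d : K) : 'M[K]_2 :=
  \matrix_(i < 2, j < 2)
    if (i : nat) == 0%N then (if (j : nat) == 0%N then a else b)
    else (if (j : nat) == 0%N then c else d).

Inductive gen := genT | genS | genV.

(* A letter is a generator or its inverse (flag true = inverse). *)
Definition letter := (gen * bool)%type.

(* Integer representatives of the generators: T(x)=1+x, S(x)=-1/x, V(x)=-x *)
Definition genZ (g : gen) : 'M[int]_2 :=
  match g with
  | genT => mx2 1 1 0 1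
  | genS => mx2 0 (-1) 1 0
  | genV => mx2 (-1) 0 0 1
  end.

(* The inverse in PGL_2 of a class represented by M is represented by adj M. *)
Definition letter_mx (K : comNzRingType) (f : gen -> 'M[K]_2) (l : letter) : 'M[K]_2 :=
  if l.2 then \adj (f l.1) else f l.1.

Definition word_mx (K : comNzRingType) (f : gen -> 'M[K]_2) (w : seq letter) : 'M[K]_2 :=
  foldr (fun l M => letter_mx f l *m M) 1%:M w.

Definition pglZ_eq (A B : 'M[int]_2) : Prop := A = B \/ A = - B.

Definition pgl_eq (K : fieldType) (A B : 'M[K]_2) : Prop :=
  exists c : K, c != 0 /\ A = c *: B.

Local Open Scope complex_scope.

(* omega = e^{2 pi i/6} = 1/2 + i sqrt(3)/2 *)
Definition omega (R : realType) : R[i] :=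
  ((2%:R)^-1 +i* (Num.sqrt (3%:R : R) / 2%:R))%C.

Definition transcendental (R : realType) (r : R[i]) : Prop :=
  forall p : {poly rat}, p != 0 -> (map_poly (ratr : rat -> R[i]) p).[r] != 0.

Inductive psi_kind := kPsi | kPsiPlus | kPsiMinus.

(* Images of the generators with q := r, denominators cleared
   (Psi^{+-}(S) multiplied by q, Psi^{+-}(V) multiplied by q(q - omega^{+-1})). *)
Definition psi_gen (R : realType) (k : psi_kind) (r : R[i]) (g : gen) : 'M[R[i]]_2 :=
  let w := match k with kPsiMinus => (omega R)^-1 | _ => omega R end in
  match k, g with
  | _, genT => mx2 r 1 0 1
  | kPsi, genS => mx2 0 (-1) r 0
  | kPsi, genV => mx2 r (1 - r) (r - r ^+ 2) (- r)
  | _, genS => mx2 r 1 (r * (- r + w)) (- r)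
  | _, genV => mx2 (r * (r - w)) (r + 1) (r * (1 - r) * (r - w)) (- (r * (r - w)))
  end.

From mathcomp Require Import all_boot all_order all_algebra.
From mathcomp Require Import complex reals ring zify.
Set Implicit Arguments. Unset Strict Implicit. Unset Printing Implicit Defensive.
Import GRing.Theory Num.Theory.
Local Open Scope ring_scope.

(* Evaluate the words over the polynomial ring in [q] with coefficients in
   [Z[w]], [w ^+ 2 = w - 1], giving matrices [A] and [B]. If the specialisations
   at [r] agree projectively, [A *m \adj B] is scalar at [r]. An element
   [x + w y] of [Z[w][q]] vanishing at [r] has norm [x^2 + x y + y^2], an integer
   polynomial vanishing at [r], hence zero, which forces [x = y = 0]; so
   [A *m \adj B] is a scalar polynomial matrix. At [q = 1] every generator is, up
   to a scalar, the integer generator conjugated by one fixed unipotent matrix, so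
   the integer images [A0], [B0] of the words also have [A0 *m \adj B0] scalar;
   as their determinants are [+-1], [A0 = +-B0]. *)

Section Mx2.
Variable K : comNzRingType.
Implicit Types (a b c d e f g h : K) (A B M : 'M[K]_2).

Lemma mx2E M : M = mx2 (M 0 0) (M 0 1) (M 1 0) (M 1 1).
Proof.
apply/matrixP => i j; rewrite !mxE.
by case: i => [[|[|//]] ?]; case: j => [[|[|//]] ?] /=; congr (M _ _); apply: val_inj.
Qed.

Lemma mx2_mul a b c d e f g h :
  mx2 a b c d *m mx2 e f g h = mx2 (a*e+b*g) (a*f+b*h) (c*e+d*g) (c*f+d*h).
Proof.
apply/matrixP => i j; rewrite !mxE !big_ord_recr big_ord0 /= add0r !mxE.
by case: i => [[|[|//]] ?]; case: j => [[|[|//]] ?].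
Qed.

Lemma adj_mx2 a b c d : \adj (mx2 a b c d) = mx2 d (-b) (-c) a.
Proof.
apply/matrixP => i j; rewrite !mxE /cofactor det_mx11 !mxE.
by case: i => [[|[|//]] ?]; case: j => [[|[|//]] ?] /=;
  rewrite ?expr0 ?expr1 ?expr2 ?mulN1r ?opprK ?mul1r.
Qed.

Lemma det_mx2 a b c d : \det (mx2 a b c d) = a * d - b * c.
Proof.
rewrite (expand_det_row _ 0) !big_ord_recr big_ord0 /= add0r /cofactor.
by rewrite !det_mx11 !mxE /= expr0 expr1 mul1r mulN1r; ring.
Qed.

Lemma scale_mx2 x a b c d : x *: mx2 a b c d = mx2 (x*a) (x*b) (x*c) (x*d).
Proof. by apply/matrixP => i j; rewrite !mxE; case: ifP; case: ifP. Qed.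

Lemma adj_mx2M A B : \adj (A *m B) = \adj B *m \adj A.
Proof.
by rewrite (mx2E A) (mx2E B) mx2_mul !adj_mx2 mx2_mul; congr mx2; ring.
Qed.

Lemma adj_mx2K M : \adj (\adj M) = M.
Proof. by rewrite {1}(mx2E M) !adj_mx2 !opprK -mx2E. Qed.

Lemma det_adj_mx2 M : \det (\adj M) = \det M.
Proof. by rewrite (mx2E M) adj_mx2 !det_mx2; ring. Qed.
End Mx2.

Lemma map_mx2 (K L : Type) (f : K -> L) (a b c d : K) :
  map_mx f (mx2 a b c d) = mx2 (f a) (f b) (f c) (f d).
Proof. by apply/matrixP => i j; rewrite !mxE; case: ifP; case: ifP. Qed.

Lemma eq_word_mx (K : comNzRingType) (f f' : gen -> 'M[K]_2) :
  f =1 f' -> word_mx f =1 word_mx f'.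
Proof.
move=> eq_f; elim=> [|l w IH] //=.
by rewrite /word_mx /= -/(word_mx _ _) IH /letter_mx eq_f.
Qed.

Lemma map_word_mx (K L : comNzRingType) (phi : {rmorphism K -> L}) (f : gen -> 'M[K]_2) w :
  map_mx phi (word_mx f w) = word_mx (fun g => map_mx phi (f g)) w.
Proof.
elim: w => [|l w IH]; first by rewrite /word_mx /= map_mx1.
rewrite /word_mx /= -!/(word_mx _ _) -IH map_mxM /letter_mx.
by case: l.2; rewrite ?map_mx_adj.
Qed.

Lemma det_word_mx_sqr (K : comNzRingType) (f : gen -> 'M[K]_2) w :
  (forall g, \det (f g) ^+ 2 = 1) -> \det (word_mx f w) ^+ 2 = 1.
Proof.
move=> det_f; elim: w => [|l w IH]; first by rewrite /word_mx /= det1 expr1n.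
rewrite /word_mx /= -/(word_mx _ _) det_mulmx exprMn IH mulr1 /letter_mx.
by case: l.2; rewrite ?det_adj_mx2.
Qed.

Definition sl_conj {K : comNzRingType} {n : nat} (P M : 'M[K]_n) := P *m M *m \adj P.

Section SLConjugation.
Context {K : comNzRingType} {n : nat}.
Variable P : 'M[K]_n.
Hypothesis detP : \det P = 1.

Lemma mul_adj_mx_det1 : \adj P *m P = 1%:M.
Proof. by rewrite mul_adj_mx detP. Qed.

Lemma sl_conj1 : sl_conj P 1%:M = 1%:M.
Proof. by rewrite /sl_conj mulmx1 mul_mx_adj detP. Qed.

Lemma sl_conjM M N : sl_conj P (M *m N) = sl_conj P M *m sl_conj P N.
Proof.
by rewrite /sl_conj !mulmxA -[P *m M *m \adj P *m P]mulmxA mul_adj_mx_det1 mulmx1.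
Qed.

Lemma is_scalar_sl_conj M : is_scalar_mx (sl_conj P M) = is_scalar_mx M.
Proof.
apply/is_scalar_mxP/is_scalar_mxP => -[a Ma]; exists a; last first.
  by rewrite /sl_conj Ma mul_mx_scalar -scalemxAl mul_mx_adj detP scalemx1.
have -> : M = \adj P *m sl_conj P M *m P.
  by rewrite /sl_conj !mulmxA mul_adj_mx_det1 mul1mx -mulmxA mul_adj_mx_det1 mulmx1.
by rewrite Ma mul_mx_scalar -scalemxAl mul_adj_mx_det1 scalemx1.
Qed.
End SLConjugation.

Lemma sl_conj_adj (K : comNzRingType) (P M : 'M[K]_2) :
  \adj (sl_conj P M) = sl_conj P (\adj M).
Proof. by rewrite /sl_conj !adj_mx2M adj_mx2K mulmxA. Qed.

Lemma word_mx_sl_conj (K : comNzRingType) (P : 'M[K]_2) (f : gen -> 'M[K]_2) w :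
  \det P = 1 -> word_mx (fun g => sl_conj P (f g)) w = sl_conj P (word_mx f w).
Proof.
move=> detP; elim: w => [|l w IH]; first by rewrite /word_mx /= sl_conj1.
rewrite /word_mx /= -!/(word_mx _ _) IH sl_conjM // /letter_mx.
by case: l.2; rewrite ?sl_conj_adj.
Qed.

Section ProjectiveEquality.
Variable K : fieldType.
Implicit Types A B : 'M[K]_2.

Lemma pgl_eqM A A' B B' : pgl_eq A A' -> pgl_eq B B' -> pgl_eq (A *m B) (A' *m B').
Proof.
move=> [a [a0 ->]] [b [b0 ->]]; exists (a * b); split; first by rewrite mulf_neq0.
by rewrite -scalemxAl -scalemxAr scalerA.
Qed.

Lemma pgl_eq_adj A B : pgl_eq A B -> pgl_eq (\adj A) (\adj B).
Proof. by move=> [a [a0 ->]]; exists a; split; rewrite // adjZ expr1. Qed.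

Lemma pgl_eq_word (f h : gen -> 'M[K]_2) :
  (forall g, pgl_eq (f g) (h g)) -> forall w, pgl_eq (word_mx f w) (word_mx h w).
Proof.
move=> fh; elim=> [|l w IH]; first by exists 1; rewrite oner_neq0 scale1r.
apply: pgl_eqM IH; rewrite /letter_mx; case: l.2; last exact: fh.
exact/pgl_eq_adj/fh.
Qed.

Lemma pgl_eq_is_scalar A B : pgl_eq A B -> is_scalar_mx A = is_scalar_mx B.
Proof.
move=> [a [a0 ->]]; apply/is_scalar_mxP/is_scalar_mxP => -[b Bb].
  by exists (a^-1 * b); rewrite -scale_scalar_mx -Bb scalerA mulVf // scale1r.
by exists (a * b); rewrite Bb scale_scalar_mx.
Qed.

Lemma pgl_eq_mul_adj_is_scalar A B : pgl_eq A B -> is_scalar_mx (A *m \adj B).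
Proof.
move=> [a [_ ->]]; apply/is_scalar_mxP; exists (a * \det B).
by rewrite -scalemxAl mul_mx_adj scale_scalar_mx.
Qed.
End ProjectiveEquality.

Lemma int_poly_eq0 (a : {poly int}) : (forall t : int, a.[t] = 0) -> a = 0.
Proof.
move=> a_eq0; apply: (@roots_geq_poly_eq0 _ a [seq i%:Z | i <- iota 0 (size a)]).
- by apply/allP => x /mapP [i _ ->]; rewrite /root a_eq0.
- by rewrite map_inj_uniq ?iota_uniq // => i j [].
- by rewrite size_map size_iota.
Qed.

Lemma int_poly_norm_eq0 (a b : {poly int}) :
  a ^+ 2 + a * b + b ^+ 2 = 0 -> a = 0 /\ b = 0.
Proof.
move=> norm_eq0.
have ab_eq0 t : a.[t] = 0 /\ b.[t] = 0.
  have : (a ^+ 2 + a * b + b ^+ 2).[t] = 0 by rewrite norm_eq0 horner0.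
  rewrite !hornerE => e.
  by set x := a.[t] in e *; set y := b.[t] in e *; split; nia.
by split; apply: int_poly_eq0 => t; case: (ab_eq0 t).
Qed.

Section EisensteinPolynomials.
Context {K : comNzRingType}.
Variable w : K.
Hypothesis w_sqr : w ^+ 2 = w - 1.

Definition Zw_poly (p : {poly K}) := exists a b : {poly int},
  p = map_poly intr a + w%:P * map_poly intr b.

Definition Zw_mx {n} (M : 'M[{poly K}]_n) := forall i j, Zw_poly (M i j).

Lemma Zw_poly_int (a : {poly int}) : Zw_poly (map_poly intr a).
Proof. by exists a, 0; rewrite rmorph0 mulr0 addr0. Qed.

Lemma Zw_poly0 : Zw_poly 0.
Proof. by have := Zw_poly_int 0; rewrite rmorph0. Qed.

Lemma Zw_poly1 : Zw_poly 1.
Proof. by have := Zw_poly_int 1; rewrite rmorph1. Qed.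

Lemma Zw_polyX : Zw_poly 'X.
Proof. by have := Zw_poly_int 'X; rewrite map_polyX. Qed.

Lemma Zw_polyC_w : Zw_poly w%:P.
Proof. by exists 0, 1; rewrite rmorph0 rmorph1 mulr1 add0r. Qed.

Lemma Zw_polyD p q : Zw_poly p -> Zw_poly q -> Zw_poly (p + q).
Proof.
move=> [a [b ->]] [c [d ->]]; exists (a + c), (b + d).
by rewrite !rmorphD /=; ring.
Qed.

Lemma Zw_polyN p : Zw_poly p -> Zw_poly (- p).
Proof. by move=> [a [b ->]]; exists (- a), (- b); rewrite !rmorphN /=; ring. Qed.

Lemma Zw_polyM p q : Zw_poly p -> Zw_poly q -> Zw_poly (p * q).
Proof.
have wP_sqr : w%:P ^+ 2 = w%:P - 1 :> {poly K} by rewrite -rmorphXn /= w_sqr rmorphB.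
move=> [a [b ->]] [c [d ->]]; exists (a * c - b * d), (a * d + b * c + b * d).
by rewrite !(rmorphD, rmorphB, rmorphM) /=; ring: wP_sqr.
Qed.

Lemma Zw_poly_sign m : Zw_poly ((-1) ^+ m).
Proof. by rewrite -signr_odd; case: odd; [apply/Zw_polyN/Zw_poly1 | apply: Zw_poly1]. Qed.

Lemma Zw_polyMn p (b : bool) : Zw_poly p -> Zw_poly (p *+ b).
Proof. by case: b => // _; apply: Zw_poly0. Qed.

Lemma Zw_poly_sum (I : Type) (r : seq I) (P : pred I) (F : I -> {poly K}) :
  (forall i, P i -> Zw_poly (F i)) -> Zw_poly (\sum_(i <- r | P i) F i).
Proof. by move=> ZF; apply: big_ind => //; [apply: Zw_poly0 | apply: Zw_polyD]. Qed.

Lemma Zw_poly_prod (I : Type) (r : seq I) (P : pred I) (F : I -> {poly K}) :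
  (forall i, P i -> Zw_poly (F i)) -> Zw_poly (\prod_(i <- r | P i) F i).
Proof. by move=> ZF; apply: big_ind => //; [apply: Zw_poly1 | apply: Zw_polyM]. Qed.

Lemma Zw_mx_scalar n p : Zw_poly p -> Zw_mx (p%:M : 'M_n).
Proof. by move=> Zp i j; rewrite mxE; apply: Zw_polyMn. Qed.

Lemma Zw_mxM n (A B : 'M_n) : Zw_mx A -> Zw_mx B -> Zw_mx (A *m B).
Proof. by move=> ZA ZB i j; rewrite mxE; apply: Zw_poly_sum => l _; apply: Zw_polyM. Qed.

Lemma Zw_mx_det n (A : 'M_n) : Zw_mx A -> Zw_poly (\det A).
Proof.
move=> ZA; apply: Zw_poly_sum => s _.
by apply: Zw_polyM (Zw_poly_sign _) _; apply: Zw_poly_prod => i _.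
Qed.

Lemma Zw_mx_adj n (A : 'M_n) : Zw_mx A -> Zw_mx (\adj A).
Proof.
move=> ZA i j; rewrite mxE; apply: Zw_polyM (Zw_poly_sign _) _.
by apply: Zw_mx_det => i' j'; rewrite !mxE.
Qed.

Lemma Zw_mx_word (f : gen -> 'M[{poly K}]_2) w0 :
  (forall g, Zw_mx (f g)) -> Zw_mx (word_mx f w0).
Proof.
move=> Zf; elim: w0 => [|l w0 IH]; first exact/Zw_mx_scalar/Zw_poly1.
apply: Zw_mxM IH; rewrite /letter_mx; case: l.2; last exact: Zf.
exact/Zw_mx_adj/Zf.
Qed.

Lemma Zw_mx_mx2 a b c d : Zw_poly a -> Zw_poly b -> Zw_poly c -> Zw_poly d ->
  Zw_mx (mx2 a b c d).
Proof. by move=> Za Zb Zc Zd i j; rewrite mxE; case: ifP; case: ifP. Qed.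

Variable r : K.
Hypothesis int_root_eq0 : forall a : {poly int}, (map_poly intr a).[r] = 0 -> a = 0.

(* The norm [(x + w y) (x + (1 - w) y) = x^2 + x y + y^2] is an integer
   polynomial vanishing at [r]. *)
Lemma Zw_poly_root_eq0 p : Zw_poly p -> p.[r] = 0 -> p = 0.
Proof.
move=> [a [b ->]]; rewrite !hornerE => root_r.
have norm_root : (map_poly intr (a ^+ 2 + a * b + b ^+ 2)).[r] = 0.
  rewrite !(rmorphD, rmorphM, rmorphXn) !hornerE.
  set x := _.[r] in root_r *; set y := _.[r] in root_r *.
  have -> : x ^+ 2 + x * y + y ^+ 2 = (x + w * y) * (x + (1 - w) * y) by ring: w_sqr.
  by rewrite root_r mul0r.
have [-> ->] : a = 0 /\ b = 0 by apply/int_poly_norm_eq0/int_root_eq0.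
by rewrite !rmorph0 mulr0 addr0.
Qed.

Lemma Zw_mx_is_scalar n (C : 'M_n) :
  Zw_mx C -> is_scalar_mx (map_mx (horner_eval r) C) -> is_scalar_mx C.
Proof.
move=> ZC /is_scalar_mxP[x Cr]; apply/is_scalar_mxP.
case: n C ZC Cr => [|n] C ZC Cr; first by exists 0; apply/matrixP => -[].
have Cr_eq i j : (C i j).[r] = x *+ (i == j) by move/matrixP: Cr => /(_ i j); rewrite !mxE.
exists (C 0 0); apply/matrixP => i j; apply/eqP; rewrite -subr_eq0 mxE; apply/eqP.
apply: Zw_poly_root_eq0; first exact/Zw_polyD/Zw_polyN/Zw_polyMn.
by rewrite hornerD hornerN hornerMn !Cr_eq eqxx subrr.
Qed.
End EisensteinPolynomials.

Lemma map_mx_is_scalar_inj (R S : nzRingType) (f : {rmorphism R -> S}) n (A : 'M[R]_n) :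
  injective f -> is_scalar_mx (map_mx f A) = is_scalar_mx A.
Proof.
move=> f_inj; rewrite /is_scalar_mx; case: (insub _) => // i.
rewrite mxE -map_scalar_mx inj_eq // => B C /matrixP BC.
by apply/matrixP => j l; apply: f_inj; have := BC j l; rewrite !mxE.
Qed.

Lemma pglZ_eq_of_is_scalar_mul_adj (A B : 'M[int]_2) :
  \det A ^+ 2 = 1 -> \det B ^+ 2 = 1 -> is_scalar_mx (A *m \adj B) -> pglZ_eq A B.
Proof.
move=> detA detB /is_scalar_mxP[m ABm].
have detB_A : \det B *: A = m *: B.
  by rewrite -mul_mx_scalar -mul_adj_mx mulmxA ABm mul_scalar_mx.
pose e := \det B * m.
have A_eB : A = e *: B by rewrite -scalerA -detB_A scalerA -expr2 detB scale1r.
have e_sqr : e ^+ 2 = 1.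
  have : e ^+ 2 = \det A * \det B by rewrite {1}A_eB detZ -mulrA -expr2 detB mulr1.
  by move: detA detB; set x := \det A; set y := \det B; nia.
move/eqP: e_sqr; rewrite sqrf_eq1 => /orP[/eqP e1 | /eqP e1].
  by left; rewrite A_eB e1 scale1r.
by right; rewrite A_eB e1 scaleN1r.
Qed.

Lemma det_word_genZ w : \det (word_mx genZ w) ^+ 2 = 1.
Proof. by apply: det_word_mx_sqr => -[]; rewrite det_mx2. Qed.

Lemma omega_sqr (R : realType) : omega R ^+ 2 = omega R - 1.
Proof.
have sqrt3 : Num.sqrt (3%:R : R) ^+ 2 = 3%:R by rewrite sqr_sqrtr // ler0n.
rewrite /omega expr2; apply/eqP; rewrite eq_complex /=.
by apply/andP; split; apply/eqP; [field: sqrt3 | field].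
Qed.

Definition psi_omega (R : realType) (k : psi_kind) : R[i] :=
  if k is kPsiMinus then (omega R)^-1 else omega R.

Lemma psi_omega_sqr (R : realType) (k : psi_kind) :
  psi_omega R k ^+ 2 = psi_omega R k - 1.
Proof.
have om2 := omega_sqr R; case: k => //=.
have -> : (omega R)^-1 = 1 - omega R by apply: mulr1_eq; ring: om2.
by ring: om2.
Qed.

Definition psi_poly {K : comNzRingType} (w : K) (k : psi_kind) (g : gen) : 'M[{poly K}]_2 :=
  match k, g with
  | _, genT => mx2 'X 1 0 1
  | kPsi, genS => mx2 0 (-1) 'X 0
  | kPsi, genV => mx2 'X (1 - 'X) ('X - 'X * 'X) (- 'X)
  | _, genS => mx2 'X 1 ('X * (- 'X + w%:P)) (- 'X)
  | _, genV => mx2 ('X * ('X - w%:P)) ('X + 1) ('X * (1 - 'X) * ('X - w%:P))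
                   (- ('X * ('X - w%:P)))
  end.

Lemma psi_gen_eval (R : realType) (k : psi_kind) (r : R[i]) (g : gen) :
  psi_gen k r g = map_mx (horner_eval r) (psi_poly (psi_omega R k) k g).
Proof. by case: k; case: g; rewrite /= map_mx2 !horner_evalE !hornerE ?expr2. Qed.

Lemma Zw_mx_psi_poly (K : comNzRingType) (w : K) (k : psi_kind) (g : gen) :
  w ^+ 2 = w - 1 -> Zw_mx w (psi_poly w k g).
Proof.
move=> w_sqr; case: k; case: g; apply: Zw_mx_mx2;
  repeat first [ apply: Zw_polyD | apply: (Zw_polyM w_sqr) | apply: Zw_polyN
               | apply: Zw_polyX | apply: Zw_poly1 | apply: Zw_poly0 | apply: Zw_polyC_w ].
Qed.

Definition unipotent {K : nzRingType} (a : K) : 'M[K]_2 := mx2 1 a 0 1.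

Lemma det_unipotent (K : comNzRingType) (a : K) : \det (unipotent a) = 1.
Proof. by rewrite det_mx2 mulr1 mulr0 subr0. Qed.

Definition psi_shift {K : nzRingType} (w : K) (k : psi_kind) : K :=
  if k is kPsi then 0 else - w.

Definition psi_scale {K : nzRingType} (w : K) (k : psi_kind) (g : gen) : K :=
  match k, g with
  | _, genT => 1
  | kPsi, genS => 1
  | kPsi, genV => -1
  | _, _ => w - 1
  end.

Lemma psi_poly_at1 (K : fieldType) (w : K) (k : psi_kind) (g : gen) :
  w ^+ 2 = w - 1 ->
  pgl_eq (map_mx (horner_eval 1) (psi_poly w k g))
         (sl_conj (unipotent (psi_shift w k)) (map_mx intr (genZ g))).
Proof.
move=> w_sqr; exists (psi_scale w k g); split.
  have w1_inv : (w - 1) * (- w) = 1 by ring: w_sqr.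
  have w1_neq0 : w - 1 != 0.
    by apply: contra_eq_neq w1_inv => ->; rewrite mul0r eq_sym oner_neq0.
  by case: k; case: g; rewrite /= ?oppr_eq0 ?oner_neq0.
case: k; case: g; rewrite /= /sl_conj /unipotent !map_mx2 adj_mx2 !mx2_mul scale_mx2;
  rewrite !horner_evalE !hornerE /= ?rmorph0 ?rmorph1 ?rmorphN1; congr mx2; ring: w_sqr.
Qed.

Lemma transcendental_int_root_eq0 (R : realType) (r : R[i]) :
  transcendental r -> forall a : {poly int}, (map_poly intr a).[r] = 0 -> a = 0.
Proof.
move=> r_tr a; apply: contra_eq => a_neq0.
have aQ_neq0 : map_poly (intr : int -> rat) a != 0.
  by rewrite map_poly_eq0_id0 // intr_eq0 lead_coef_eq0.
have := r_tr _ aQ_neq0; rewrite -map_poly_comp.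
by rewrite (eq_map_poly (g := intr)) // => z /=; rewrite ratr_int.
Qed.

Lemma pgl_eq_word_psi_poly_at1 (K : fieldType) (w : K) (k : psi_kind) (w0 : seq letter) :
  w ^+ 2 = w - 1 ->
  pgl_eq (map_mx (horner_eval 1) (word_mx (psi_poly w k) w0))
         (sl_conj (unipotent (psi_shift w k)) (map_mx intr (word_mx genZ w0))).
Proof.
move=> w_sqr; rewrite !map_word_mx -word_mx_sl_conj ?det_unipotent //.
by apply: pgl_eq_word => g; apply: psi_poly_at1.
Qed.

Theorem mainTheorem7 (R : realType) (r : R[i]) (hr : transcendental r)
  (k : psi_kind) (w1 w2 : seq letter) :
  pgl_eq (word_mx (psi_gen k r) w1) (word_mx (psi_gen k r) w2) ->
  pglZ_eq (word_mx genZ w1) (word_mx genZ w2).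
Proof.
move=> psi_eq.
pose w := psi_omega R k; have w_sqr : w ^+ 2 = w - 1 := psi_omega_sqr R k.
pose A := word_mx (psi_poly w k) w1; pose B := word_mx (psi_poly w k) w2.
have word_eval w0 :
    word_mx (psi_gen k r) w0 = map_mx (horner_eval r) (word_mx (psi_poly w k) w0).
  by rewrite map_word_mx; apply: eq_word_mx => g; apply: psi_gen_eval.
have scalar_q : is_scalar_mx (A *m \adj B).
  apply: (Zw_mx_is_scalar w_sqr (transcendental_int_root_eq0 hr)).
    have Zw_word w0 : Zw_mx w (word_mx (psi_poly w k) w0).
      by apply: (Zw_mx_word w_sqr) => g; apply: Zw_mx_psi_poly.
    exact: (Zw_mxM w_sqr (Zw_word w1) (Zw_mx_adj w_sqr (Zw_word w2))).
  rewrite map_mxM map_mx_adj -!word_eval; exact: pgl_eq_mul_adj_is_scalar.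
have scalar_1 : is_scalar_mx (map_mx (horner_eval 1) (A *m \adj B)).
  by case/is_scalar_mxP: scalar_q => p ->; rewrite map_scalar_mx scalar_mx_is_scalar.
pose P := unipotent (psi_shift w k); have detP : \det P = 1 := det_unipotent _.
have conj_1 : pgl_eq (map_mx (horner_eval 1) (A *m \adj B))
    (sl_conj P (map_mx intr (word_mx genZ w1 *m \adj (word_mx genZ w2)))).
  rewrite map_mxM map_mx_adj map_mxM map_mx_adj (sl_conjM detP) -sl_conj_adj.
  by apply: pgl_eqM; [|apply: pgl_eq_adj]; apply: pgl_eq_word_psi_poly_at1.
apply: pglZ_eq_of_is_scalar_mul_adj; [exact: det_word_genZ | exact: det_word_genZ |].
rewrite -(map_mx_is_scalar_inj _ (@intr_inj R[i])) -(is_scalar_sl_conj detP).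
by rewrite -(pgl_eq_is_scalar conj_1).
Qed.
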